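(* Let $\mathsf V=(\mathsf V,\otimes,k)$ be a quantale in which $k=\top$ is the top element, and assume there is a sequence $(u_n)_{n\in\mathbb N}$ in $\mathsf V$ such that $\bigvee_{n\in\mathbb N}u_n=k$, $u_n\ll k$ for all $n$, and $u_n\le u_{n+1}$ for all $n$. Let $X=(X,a)$ be a $\mathsf V$-category. Then for every adjunction $\varphi\dashv\psi$ with $\varphi:E\rightharpoonup X$ and $\psi:X\rightharpoonup E$ there is a Cauchy sequence $s$ in $X$ with $\varphi=\varphi_s$ and $\psi=\psi_s$. Consequently, $X$ is Cauchy complete if and only if every Cauchy sequence in $X$ converges.
   Context: A quantale $\mathsf V=(\mathsf V,\otimes,k)$ is a complete anti-symmetric lattice with an associative, commutative binary operation $\otimes$ with neutral element $k$ such that $u\otimes\bigvee_{i}v_i=\bigvee_i(u\otimes v_i)$ for all families; $\hom(u,-)$ denotes the right adjoint of $u\otimes-$. For $u,x\in\mathsf V$, $u\ll x$ ($u$ is totally below $x$) means: for every $S\subseteq\mathsf V$ with $x\le\bigvee S$ there is $s\in S$ with $u\le s$. A $\mathsf V$-category $X=(X,a)$ is a set with $a:X\times X\to\mathsf V$ such that $k\le a(x,x)$ and $a(x,y)\otimes a(y,z)\le a(x,z)$. A $\mathsf V$-module $\varphi:(X,a)\rightharpoonup(Y,b)$ is a map $\varphi:X\times Y\to\mathsf V$ with $a(x,x')\otimes\varphi(x',y)\le\varphi(x,y)$ and $\varphi(x,y)\otimes b(y,y')\le\varphi(x,y')$; composition is $(\psi\cdot\varphi)(x,z)=\bigvee_{y}\varphi(x,y)\otimes\psi(y,z)$,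 modules are ordered pointwise, and $\varphi\dashv\psi$ (for $\psi:Y\rightharpoonup X$) means $a\le\psi\cdot\varphi$ and $\varphi\cdot\psi\le b$. $E=(\{\star\},k)$ is the one-point $\mathsf V$-category with $k(\star,\star)=k$; modules $E\rightharpoonup X$ and $X\rightharpoonup E$ are identified with maps $X\to\mathsf V$. For $x\in X$, $x_*:E\rightharpoonup X$ is $y\mapsto a(x,y)$ and $x^*:X\rightharpoonup E$ is $y\mapsto a(y,x)$. $X$ is Cauchy complete if every left adjoint module $\varphi:E\rightharpoonup X$ is of the form $x_*$ for some $x\in X$. For a sequence $s=(x_n)$ in $X$, $\mathrm{Cauchy}(s)=\bigvee_{N}\bigwedge_{n,m\ge N}a(x_n,x_m)$, and $s$ is Cauchy if $k\le\mathrm{Cauchy}(s)$; $\varphi_s(x)=\bigvee_N\bigwedge_{n\ge N}a(x_n,x)$ and $\psi_s(x)=\bigvee_N\bigwedge_{n\ge N}a(x,x_n)$. For $M\subseteq X$, the closure is $\overline M=\{x\in X\mid k\le\bigvee_{y\in M}a(x,y)\otimes a(y,x)\}$; a sequence $s$ converges to $x$ if $x\in\overline{\{x_n\mid n\in M\}}$ for every infinite $M\subseteq\mathbb N$. *)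

From Stdlib Require Import Arith.

Record quantale := Quantale {
  carrier :> Type;
  qle : carrier -> carrier -> Prop;
  qsup : (carrier -> Prop) -> carrier;
  tens : carrier -> carrier -> carrier;
  qunit : carrier;
  qle_refl : forall x, qle x x;
  qle_trans : forall x y z, qle x y -> qle y z -> qle x z;
  qle_antisym : forall x y, qle x y -> qle y x -> x = y;
  qsup_ub : forall (S : carrier -> Prop) x, S x -> qle x (qsup S);
  qsup_least : forall (S : carrier -> Prop) y,
      (forall x, S x -> qle x y) -> qle (qsup S) y;
  tens_assoc : forall x y z, tens x (tens y z) = tens (tens x y) z;
  tens_comm : forall x y, tens x y = tens y x;
  tens_unit : forall x, tens qunit x = x;
  tens_sup : forall u (S : carrier -> Prop),
      tens u (qsup S) = qsup (fun w => exists v, S v /\ w = tens u v)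
}.

Arguments qle {V} : rename.
Arguments qsup {V} : rename.
Arguments tens {V} : rename.
Arguments qunit {V} : rename.

Section Defs.
Variable V : quantale.

Definition qinf (S : V -> Prop) : V := qsup (fun y => forall x, S x -> qle y x).

Definition isup {I : Type} (f : I -> V) : V := qsup (fun w => exists i, w = f i).
Definition iinf {I : Type} (f : I -> V) : V := qinf (fun w => exists i, w = f i).

Definition totally_below (u x : V) : Prop :=
  forall S : V -> Prop, qle x (qsup S) -> exists s, S s /\ qle u s.

Variable X : Type.
Variable a : X -> X -> V.

Definition is_Vcat : Prop :=
  (forall x, qle qunit (a x x)) /\
  (forall x y z, qle (tens (a x y) (a y z)) (a x z)).

(** Modules E -|-> X and X -|-> E, identified with maps X -> V. *)
Definition module_EX (phi : X -> V) : Prop :=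
  (forall y, qle (tens qunit (phi y)) (phi y)) /\
  (forall y y', qle (tens (phi y) (a y y')) (phi y')).

Definition module_XE (psi : X -> V) : Prop :=
  (forall x x', qle (tens (a x x') (psi x')) (psi x)) /\
  (forall x, qle (tens (psi x) qunit) (psi x)).

(** phi -| psi:  k <= psi . phi  and  phi . psi <= a. *)
Definition adjoint (phi psi : X -> V) : Prop :=
  qle qunit (isup (fun y => tens (phi y) (psi y))) /\
  (forall x y, qle (tens (psi x) (phi y)) (a x y)).

Definition lower_star (x : X) : X -> V := fun y => a x y.
Definition upper_star (x : X) : X -> V := fun y => a y x.

Definition cauchy_complete : Prop :=
  forall phi : X -> V, module_EX phi ->
    (exists psi, module_XE psi /\ adjoint phi psi) ->
    exists x, phi = lower_star x.

Definition Cauchy_val (s : nat -> X) : V :=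
  isup (fun N : nat => qinf (fun w => exists n m, N <= n /\ N <= m /\ w = a (s n) (s m))).

Definition is_Cauchy (s : nat -> X) : Prop := qle qunit (Cauchy_val s).

Definition phi_s (s : nat -> X) : X -> V :=
  fun x => isup (fun N : nat => qinf (fun w => exists n, N <= n /\ w = a (s n) x)).

Definition psi_s (s : nat -> X) : X -> V :=
  fun x => isup (fun N : nat => qinf (fun w => exists n, N <= n /\ w = a x (s n))).

Definition closure (M : X -> Prop) (x : X) : Prop :=
  qle qunit (qsup (fun w => exists y, M y /\ w = tens (a x y) (a y x))).

Definition infinite_nat (M : nat -> Prop) : Prop :=
  forall N, exists n, N <= n /\ M n.

Definition converges_to (s : nat -> X) (x : X) : Prop :=
  forall M : nat -> Prop, infinite_nat M ->
    closure (fun y => exists n, M n /\ y = s n) x.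

End Defs.

Arguments qinf {V}.
Arguments isup {V I}.
Arguments iinf {V I}.
Arguments totally_below {V}.
Arguments is_Vcat {V X}.
Arguments module_EX {V X}.
Arguments module_XE {V X}.
Arguments adjoint {V X}.
Arguments lower_star {V X}.
Arguments upper_star {V X}.
Arguments cauchy_complete {V X}.
Arguments Cauchy_val {V X}.
Arguments is_Cauchy {V X}.
Arguments phi_s {V X}.
Arguments psi_s {V X}.
Arguments closure {V X}.
Arguments converges_to {V X}.

(* A left adjoint module phi -| psi is approximated by a sequence: since each
   u n is totally below k <= \/_y phi y (x) psi y, there is a point y_n with
   u n <= phi y_n (x) psi y_n, and as k is the top element this gives
   u n <= phi y_n and u n <= psi y_n.  Because the u n increase to k, the
   adjunction inequality psi x (x) phi y <= a(x, y) makes (y_n) Cauchy, and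
   the module laws identify phi, psi with phi_s, psi_s.  Conversely, for a
   Cauchy sequence s the modules phi_s -| psi_s are adjoint; so Cauchy
   completeness gives a point x with x_* = phi_s, to which s converges, and
   a limit x of an approximating sequence satisfies k <= phi x, k <= psi x,
   which forces phi = x_*. *)
From Stdlib Require Import Lia FunctionalExtensionality ClassicalEpsilon.

Arguments qle_refl {_} x.
Arguments qle_trans {_} x y z.
Arguments qle_antisym {_} x y.
Arguments qsup_ub {_} S x.
Arguments qsup_least {_} S y.
Arguments tens_comm {_} x y.
Arguments tens_unit {_} x.
Arguments tens_sup {_} u S.

Section QuantaleFacts.
Variable V : quantale.

Lemma tens_unit_r (x : V) : tens x qunit = x.
Proof. rewrite tens_comm. apply tens_unit. Qed.

Lemma tens_monotone_r (x y z : V) : qle y z -> qle (tens x y) (tens x z).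
Proof.
  intros Hyz.
  (* monotonicity comes from distributivity over the join of the pair {y, z} *)
  assert (Hpair : qsup (fun w => w = y \/ w = z) = z).
  { apply qle_antisym.
    - apply qsup_least. intros w [-> | ->]; [exact Hyz | apply qle_refl].
    - apply qsup_ub. now right. }
  rewrite <- Hpair, tens_sup.
  apply qsup_ub. exists y. split; [left |]; reflexivity.
Qed.

Lemma tens_monotone (x x' y y' : V) :
  qle x x' -> qle y y' -> qle (tens x y) (tens x' y').
Proof.
  intros Hx Hy. apply qle_trans with (tens x y'); [now apply tens_monotone_r |].
  rewrite (tens_comm x), (tens_comm x'). now apply tens_monotone_r.
Qed.

Lemma isup_ub {I : Type} (f : I -> V) (i : I) : qle (f i) (isup f).
Proof. apply qsup_ub. now exists i. Qed.

Lemma isup_least {I : Type} (f : I -> V) (c : V) :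
  (forall i, qle (f i) c) -> qle (isup f) c.
Proof. intros H. apply qsup_least. intros w [i ->]. apply H. Qed.

Lemma qinf_lb (S : V -> Prop) (x : V) : S x -> qle (qinf S) x.
Proof. intros Hx. apply qsup_least. intros w Hw. exact (Hw x Hx). Qed.

Lemma qinf_glb (S : V -> Prop) (v : V) :
  (forall x, S x -> qle v x) -> qle v (qinf S).
Proof. intros H. now apply qsup_ub. Qed.

Lemma tens_isup_le {I : Type} (x : V) (f : I -> V) (c : V) :
  (forall i, qle (tens x (f i)) c) -> qle (tens x (isup f)) c.
Proof.
  intros H. unfold isup. rewrite tens_sup.
  apply qsup_least. intros w [v [[i ->] ->]]. apply H.
Qed.

Lemma isup_tens_le {I : Type} (x : V) (f : I -> V) (c : V) :
  (forall i, qle (tens (f i) x) c) -> qle (tens (isup f) x) c.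
Proof.
  intros H. rewrite tens_comm. apply tens_isup_le.
  intros i. rewrite tens_comm. apply H.
Qed.

Definition nondecreasing (c : nat -> V) : Prop :=
  forall n m, n <= m -> qle (c n) (c m).

Lemma nondecreasing_succ (c : nat -> V) :
  (forall n, qle (c n) (c (S n))) -> nondecreasing c.
Proof.
  intros H n m Hnm. induction Hnm; [apply qle_refl |].
  eapply qle_trans; eauto.
Qed.

Lemma isup_tens_diag (c e : nat -> V) :
  nondecreasing c -> nondecreasing e ->
  qle (tens (isup c) (isup e)) (isup (fun N => tens (c N) (e N))).
Proof.
  intros Hc He. apply isup_tens_le. intros n. apply tens_isup_le. intros m.
  apply qle_trans with (tens (c (max n m)) (e (max n m))).
  - apply tens_monotone; [apply Hc | apply He]; lia.
  - apply (isup_ub (fun N => tens (c N) (e N))).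
Qed.

Lemma unit_le_isup_tens_diag (c : nat -> V) :
  nondecreasing c -> qle qunit (isup c) ->
  qle qunit (isup (fun N => tens (c N) (c N))).
Proof.
  intros Hc Hk. apply qle_trans with (tens (isup c) (isup c)).
  - rewrite <- (tens_unit qunit). now apply tens_monotone.
  - now apply isup_tens_diag.
Qed.

Hypothesis unit_top : forall v : V, qle v qunit.

Lemma tens_le_l (x y : V) : qle (tens x y) x.
Proof.
  rewrite <- (tens_unit_r x) at 2. apply tens_monotone_r, unit_top.
Qed.

Lemma tens_le_r (x y : V) : qle (tens x y) y.
Proof. rewrite tens_comm. apply tens_le_l. Qed.

End QuantaleFacts.

Arguments nondecreasing {V}.

Definition dual {V : quantale} {X : Type} (a : X -> X -> V) : X -> X -> V :=
  fun x y => a y x.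

Lemma is_Vcat_dual {V : quantale} {X : Type} (a : X -> X -> V) :
  is_Vcat a -> is_Vcat (dual a).
Proof.
  intros [Hrefl Htrans]. split; [exact Hrefl |].
  intros x y z. unfold dual. rewrite tens_comm. apply Htrans.
Qed.

Lemma psi_s_dual {V : quantale} {X : Type} (a : X -> X -> V) (s : nat -> X) :
  psi_s a s = phi_s (dual a) s.
Proof. reflexivity. Qed.

Section CauchySequences.
Variables (V : quantale) (X : Type) (a : X -> X -> V).
Hypothesis Ha : is_Vcat a.
Variable s : nat -> X.

Definition cauchy_tail (N : nat) : V :=
  qinf (fun w => exists n m, N <= n /\ N <= m /\ w = a (s n) (s m)).

Lemma phi_s_tens_le (y y' : X) :
  qle (tens (phi_s a s y) (a y y')) (phi_s a s y').
Proof.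
  unfold phi_s at 1. apply isup_tens_le. intros N.
  eapply qle_trans; [| apply (isup_ub _ _ N)]. apply qinf_glb.
  intros w [n [Hn ->]]. eapply qle_trans; [| apply (proj2 Ha (s n) y y')].
  apply tens_monotone; [| apply qle_refl]. apply qinf_lb. eauto.
Qed.

Lemma psi_s_tens_phi_s_le (x y : X) :
  qle (tens (psi_s a s x) (phi_s a s y)) (a x y).
Proof.
  apply isup_tens_le. intros N. apply tens_isup_le. intros M.
  eapply qle_trans; [| apply (proj2 Ha x (s (max N M)) y)].
  apply tens_monotone; apply qinf_lb; exists (max N M); split; auto; lia.
Qed.

Lemma cauchy_tail_nondecreasing : nondecreasing cauchy_tail.
Proof.
  intros n m Hnm. apply qinf_glb. intros w [p [q [Hp [Hq ->]]]].
  apply qinf_lb. exists p, q. repeat split; auto; lia.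
Qed.

Lemma cauchy_tail_le_phi_s (N n : nat) :
  N <= n -> qle (cauchy_tail N) (phi_s a s (s n)).
Proof.
  intros Hn. eapply qle_trans; [| apply (isup_ub _ _ N)]. apply qinf_glb.
  intros w [m [Hm ->]]. apply qinf_lb. exists m, n. auto.
Qed.

Lemma cauchy_tail_le_psi_s (N n : nat) :
  N <= n -> qle (cauchy_tail N) (psi_s a s (s n)).
Proof.
  intros Hn. eapply qle_trans; [| apply (isup_ub _ _ N)]. apply qinf_glb.
  intros w [m [Hm ->]]. apply qinf_lb. exists n, m. auto.
Qed.

Hypothesis Hs : is_Cauchy a s.

Lemma unit_le_isup_cauchy_tail_sq :
  qle qunit (isup (fun N => tens (cauchy_tail N) (cauchy_tail N))).
Proof. exact (unit_le_isup_tens_diag V _ cauchy_tail_nondecreasing Hs). Qed.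

Lemma Cauchy_adjoint : adjoint a (phi_s a s) (psi_s a s).
Proof.
  split; [| exact psi_s_tens_phi_s_le].
  eapply qle_trans; [apply unit_le_isup_cauchy_tail_sq |].
  apply isup_least. intros N.
  eapply qle_trans; [| apply (isup_ub _ (fun y => tens (phi_s a s y) (psi_s a s y)) (s N))].
  apply tens_monotone; [apply cauchy_tail_le_phi_s | apply cauchy_tail_le_psi_s]; auto.
Qed.

Lemma converges_to_of_phi_s_eq (x : X) :
  phi_s a s = lower_star a x -> converges_to a s x.
Proof.
  intros Hx M HM. eapply qle_trans; [apply unit_le_isup_cauchy_tail_sq |].
  apply isup_least. intros N. destruct (HM N) as [n [Hn HMn]].
  eapply qle_trans; [| apply qsup_ub; exists (s n); split; [now exists n | reflexivity]].
  apply tens_monotone.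
  - change (a x (s n)) with (lower_star a x (s n)). rewrite <- Hx.
    now apply cauchy_tail_le_phi_s.
  - (* phi_s x = a(x, x) >= k, and psi_s (s n) (x) phi_s x <= a(s n, x) *)
    eapply qle_trans; [| apply (psi_s_tens_phi_s_le (s n) x)].
    rewrite Hx. rewrite <- (tens_unit_r V (cauchy_tail N)).
    apply tens_monotone; [now apply cauchy_tail_le_psi_s | apply (proj1 Ha)].
Qed.

End CauchySequences.

Lemma phi_s_module {V : quantale} {X : Type} (a : X -> X -> V) (s : nat -> X) :
  is_Vcat a -> module_EX a (phi_s a s).
Proof.
  intros Ha. split; [intros y; rewrite tens_unit; apply qle_refl |].
  exact (phi_s_tens_le V X a Ha s).
Qed.

Lemma psi_s_module {V : quantale} {X : Type} (a : X -> X -> V) (s : nat -> X) :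
  is_Vcat a -> module_XE a (psi_s a s).
Proof.
  intros Ha. split; [| intros x; rewrite tens_unit_r; apply qle_refl].
  intros x x'. rewrite tens_comm.
  exact (phi_s_tens_le V X (dual a) (is_Vcat_dual a Ha) s x' x).
Qed.

Lemma cauchy_complete_Cauchy_converges {V : quantale} {X : Type} (a : X -> X -> V) :
  is_Vcat a -> cauchy_complete a ->
  forall s : nat -> X, is_Cauchy a s -> exists x, converges_to a s x.
Proof.
  intros Ha Hcc s Hs.
  destruct (Hcc (phi_s a s) (phi_s_module a s Ha)) as [x Hx].
  - exists (psi_s a s). split; [now apply psi_s_module | now apply Cauchy_adjoint].
  - exists x. now apply converges_to_of_phi_s_eq.
Qed.

Section Approximation.
Variables (V : quantale) (u : nat -> V).
Hypotheses (Hu_sup : isup u = qunit) (Hu_mono : nondecreasing u).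
Variables (X : Type) (a : X -> X -> V) (phi psi : X -> V) (s : nat -> X).
Hypothesis Hphi_module : forall y y', qle (tens (phi y) (a y y')) (phi y').
Hypothesis Hphi_approx : forall n, qle (u n) (phi (s n)).

Lemma phi_le_phi_s (x : X) :
  (forall n, qle (u n) (psi (s n))) ->
  (forall x y, qle (tens (psi x) (phi y)) (a x y)) ->
  qle (phi x) (phi_s a s x).
Proof.
  intros Hpsi_approx Hadj.
  rewrite <- (tens_unit (phi x)), <- Hu_sup. apply isup_tens_le. intros N.
  eapply qle_trans; [| apply (isup_ub _ _ N)]. apply qinf_glb.
  intros w [n [Hn ->]]. eapply qle_trans; [| apply (Hadj (s n) x)].
  apply tens_monotone; [| apply qle_refl].
  eapply qle_trans; [apply Hu_mono, Hn | apply Hpsi_approx].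
Qed.

Lemma phi_s_le_phi (x : X) : qle (phi_s a s x) (phi x).
Proof.
  rewrite <- (tens_unit (phi_s a s x)), <- Hu_sup.
  apply isup_tens_le. intros n. apply tens_isup_le. intros N.
  eapply qle_trans; [| apply (Hphi_module (s (max n N)) x)].
  apply tens_monotone.
  - eapply qle_trans; [apply Hu_mono with (m := max n N); lia | apply Hphi_approx].
  - apply qinf_lb. exists (max n N). split; auto; lia.
Qed.

Lemma unit_le_phi_of_approx_limit (x : X) :
  (forall N, exists n, N <= n /\ qle (u N) (a (s n) x)) -> qle qunit (phi x).
Proof.
  intros Hlim. eapply qle_trans.
  - apply (unit_le_isup_tens_diag V u Hu_mono). rewrite Hu_sup. apply qle_refl.
  - apply isup_least. intros N. destruct (Hlim N) as [n [Hn HN]].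
    eapply qle_trans; [| apply (Hphi_module (s n) x)].
    apply tens_monotone; [| exact HN].
    eapply qle_trans; [apply Hu_mono, Hn | apply Hphi_approx].
Qed.

End Approximation.

Section LeftAdjoints.
Variables (V : quantale) (u : nat -> V).
Hypotheses (Hu_sup : isup u = qunit) (Hu_mono : nondecreasing u).
Variables (X : Type) (a : X -> X -> V) (phi psi : X -> V).
Hypotheses (Hphi : module_EX a phi) (Hpsi : module_XE a psi) (Hadj : adjoint a phi psi).

Lemma psi_module_dual :
  forall y y', qle (tens (psi y) (dual a y y')) (psi y').
Proof. intros y y'. rewrite tens_comm. apply (proj1 Hpsi). Qed.

Lemma adjoint_dual :
  forall x y, qle (tens (phi x) (psi y)) (dual a x y).
Proof. intros x y. rewrite tens_comm. apply (proj2 Hadj). Qed.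

Section ApproximatingSequence.
Variable s : nat -> X.
Hypotheses (Hphi_approx : forall n, qle (u n) (phi (s n)))
           (Hpsi_approx : forall n, qle (u n) (psi (s n))).

Lemma approx_is_Cauchy : is_Cauchy a s.
Proof.
  eapply qle_trans; [apply (unit_le_isup_tens_diag V u Hu_mono); rewrite Hu_sup; apply qle_refl |].
  apply isup_least. intros N. eapply qle_trans; [| apply (isup_ub _ _ N)].
  apply qinf_glb. intros w [n [m [Hn [Hm ->]]]].
  eapply qle_trans; [| apply (proj2 Hadj (s n) (s m))]. apply tens_monotone.
  - eapply qle_trans; [apply Hu_mono, Hn | apply Hpsi_approx].
  - eapply qle_trans; [apply Hu_mono, Hm | apply Hphi_approx].
Qed.

Lemma approx_phi_eq : phi = phi_s a s.
Proof.
  apply functional_extensionality. intros x. apply qle_antisym.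
  - exact (phi_le_phi_s V u Hu_sup Hu_mono X a phi psi s x Hpsi_approx (proj2 Hadj)).
  - exact (phi_s_le_phi V u Hu_sup Hu_mono X a phi s (proj2 Hphi) Hphi_approx x).
Qed.

Lemma approx_psi_eq : psi = psi_s a s.
Proof.
  apply functional_extensionality. intros x. rewrite psi_s_dual. apply qle_antisym.
  - exact (phi_le_phi_s V u Hu_sup Hu_mono X (dual a) psi phi s x Hphi_approx adjoint_dual).
  - exact (phi_s_le_phi V u Hu_sup Hu_mono X (dual a) psi s psi_module_dual Hpsi_approx x).
Qed.

Lemma phi_eq_lower_star_of_approx_limit (x : X) :
  (forall N, exists n, N <= n /\ qle (u N) (a x (s n)) /\ qle (u N) (a (s n) x)) ->
  phi = lower_star a x.
Proof.
  intros Hlim.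
  assert (Hphi_x : qle qunit (phi x)).
  { apply (unit_le_phi_of_approx_limit V u Hu_sup Hu_mono X a phi s (proj2 Hphi) Hphi_approx).
    intros N. destruct (Hlim N) as [n [Hn [_ HN]]]. eauto. }
  assert (Hpsi_x : qle qunit (psi x)).
  { apply (unit_le_phi_of_approx_limit V u Hu_sup Hu_mono X (dual a) psi s
             psi_module_dual Hpsi_approx).
    intros N. destruct (Hlim N) as [n [Hn [HN _]]]. eauto. }
  apply functional_extensionality. intros z. unfold lower_star. apply qle_antisym.
  - eapply qle_trans; [| apply (proj2 Hadj x z)]. rewrite <- (tens_unit (phi z)) at 1.
    apply tens_monotone; [exact Hpsi_x | apply qle_refl].
  - eapply qle_trans; [| apply (proj2 Hphi x z)]. rewrite <- (tens_unit (a x z)) at 1.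
    apply tens_monotone; [exact Hphi_x | apply qle_refl].
Qed.

End ApproximatingSequence.

Hypothesis unit_top : forall v : V, qle v qunit.
Hypothesis Hu_way_below : forall n, totally_below (u n) qunit.

Lemma exists_approx_seq :
  exists s : nat -> X, forall n, qle (u n) (phi (s n)) /\ qle (u n) (psi (s n)).
Proof.
  assert (Hpoint : forall n, exists y, qle (u n) (tens (phi y) (psi y))).
  { intros n. destruct (Hu_way_below n _ (proj1 Hadj)) as [w [[y ->] Hw]]. eauto. }
  exists (fun n => proj1_sig (constructive_indefinite_description _ (Hpoint n))).
  intros n. destruct (constructive_indefinite_description _ (Hpoint n)) as [y Hy]; simpl.
  split; eapply qle_trans; eauto; [apply tens_le_l | apply tens_le_r]; exact unit_top.
Qed.

Lemma converges_to_approx (s : nat -> X) (x : X) :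
  converges_to a s x ->
  forall N, exists n, N <= n /\ qle (u N) (a x (s n)) /\ qle (u N) (a (s n) x).
Proof.
  intros Hx N. assert (Htail : infinite_nat (fun n => N <= n)).
  { intros M. exists (max N M). split; lia. }
  destruct (Hu_way_below N _ (Hx _ Htail)) as [w [[y [[n [Hn ->]] ->]] Hw]].
  exists n. split; [exact Hn |].
  split; eapply qle_trans; eauto; [apply tens_le_l | apply tens_le_r]; exact unit_top.
Qed.

End LeftAdjoints.

Theorem theorem3p19 (V : quantale)
  (k_top : forall v : V, qle v qunit)
  (Hu : exists u : nat -> V,
      isup u = qunit /\
      (forall n, totally_below (u n) qunit) /\
      (forall n, qle (u n) (u (S n))))
  (X : Type) (a : X -> X -> V) (HX : is_Vcat a) :
  (forall phi psi : X -> V,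
      module_EX a phi -> module_XE a psi -> adjoint a phi psi ->
      exists s : nat -> X, is_Cauchy a s /\ phi = phi_s a s /\ psi = psi_s a s) /\
  (cauchy_complete a <->
     (forall s : nat -> X, is_Cauchy a s -> exists x, converges_to a s x)).
Proof.
  destruct Hu as [u [Hu_sup [Hu_way_below Hu_succ]]].
  pose proof (nondecreasing_succ V u Hu_succ) as Hu_mono.
  split; [| split].
  - intros phi psi Hphi Hpsi Hadj.
    destruct (exists_approx_seq V u X a phi psi Hadj k_top Hu_way_below) as [s Hs].
    exists s. split; [| split].
    + eapply approx_is_Cauchy; eauto; apply Hs.
    + eapply approx_phi_eq; eauto; apply Hs.
    + eapply approx_psi_eq; eauto; apply Hs.
  - now apply cauchy_complete_Cauchy_converges.
  - intros Hconv phi Hphi [psi [Hpsi Hadj]].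
    destruct (exists_approx_seq V u X a phi psi Hadj k_top Hu_way_below) as [s Hs].
    assert (Hs_Cauchy : is_Cauchy a s) by (eapply approx_is_Cauchy; eauto; apply Hs).
    destruct (Hconv s Hs_Cauchy) as [x Hx].
    exists x. eapply phi_eq_lower_star_of_approx_limit; eauto; try apply Hs.
    eapply converges_to_approx; eauto.
Qed.
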